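(* Let $\nu\ge1$, $\omega>0$, $\lambda_1,\dots,\lambda_\nu\ge0$, $c_{\omega,\lambda}=(\omega^2+4\sum_{j=1}^\nu\lambda_j)^{1/2}$, $L$ a positive integer, $\Lambda_L=(-L,L]^\nu\cap\mathbb Z^\nu$, $\Lambda_L^*=\{\pi x/L:x\in\Lambda_L\}$, $\gamma(k)=\sqrt{\omega^2+4\sum_j\lambda_j\sin^2(k_j/2)}$, and define for $x\in\Lambda_L$, $t\in\mathbb R$ $$h^{(L)}_{1,t}(x)=\frac i2\,\mathrm{Im}\Big[\frac1{|\Lambda_L|}\sum_{k\in\Lambda_L^*}\Big(\gamma(k)+\frac1{\gamma(k)}\Big)e^{ik\cdot x-2i\gamma(k)t}\Big]+\mathrm{Re}\Big[\frac1{|\Lambda_L|}\sum_{k\in\Lambda_L^*}e^{ik\cdot x-2i\gamma(k)t}\Big],$$ $$h^{(L)}_{2,t}(x)=\frac i2\,\mathrm{Im}\Big[\frac1{|\Lambda_L|}\sum_{k\in\Lambda_L^*}\Big(\gamma(k)-\frac1{\gamma(k)}\Big)e^{ik\cdot x-2i\gamma(k)t}\Big].$$ Then for $m=1,2$, all $\mu>0$, $t\in\mathbb R$, $x\in\Lambda_L$ and every $L$, $$|h^{(L)}_{m,t}(x)|\le\Big(1+\tfrac12c_{\omega,\lambda}e^{\mu/2}+\tfrac12c_{\omega,\lambda}^{-1}\Big)e^{-\mu\left(|x|-c_{\omega,\lambda}\max\left(\frac2\mu,e^{(\mu/2)+1}\right)|t|\right)},$$ where $|x|=\sum_{j=1}^\nu|x_j|$.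 *)

From HB Require Import structures.
From mathcomp Require Import all_boot all_order all_algebra.
From mathcomp Require Import all_classical all_reals all_analysis.
From mathcomp Require Import complex.

Set Implicit Arguments.
Unset Strict Implicit.
Unset Printing Implicit Defensive.

Import Order.TTheory GRing.Theory Num.Theory.
Local Open Scope ring_scope.
Local Open Scope complex_scope.

Section Defs.
Variable R : realType.
Variable nu : nat.

(* Lattice Lambda_L = (-L, L]^nu ∩ Z^nu, parametrised bijectively by
   y : {ffun 'I_nu -> 'I_(2L)} via y |-> (j |-> y j - L + 1). *)
Definition latpt (L : nat) (y : {ffun 'I_nu -> 'I_(2 * L)}) : 'I_nu -> int :=
  fun j => (nat_of_ord (y j))%:Z - L%:Z + 1.

Definition inLambda (L : nat) (x : 'I_nu -> int) : Prop :=
  forall j, - (L%:Z) < x j <= L%:Z.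

Definition cardLambda (L : nat) : R := ((2 * L) ^ nu)%:R.

Definition dualpt (L : nat) (y : {ffun 'I_nu -> 'I_(2 * L)}) : 'I_nu -> R :=
  fun j => pi * (latpt y j)%:~R / L%:R.

Definition dotk (k : 'I_nu -> R) (x : 'I_nu -> int) : R :=
  \sum_(j < nu) k j * (x j)%:~R.

Definition gam (omega : R) (lam : 'I_nu -> R) (k : 'I_nu -> R) : R :=
  Num.sqrt (omega ^+ 2 + 4 * \sum_(j < nu) lam j * (sin (k j / 2)) ^+ 2).

Definition cwl (omega : R) (lam : 'I_nu -> R) : R :=
  Num.sqrt (omega ^+ 2 + 4 * \sum_(j < nu) lam j).

Definition cexpi (theta : R) : R[i] := (cos theta +i* sin theta)%C.

Definition lsum (omega : R) (lam : 'I_nu -> R) (L : nat)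
    (f : R -> R) (t : R) (x : 'I_nu -> int) : R[i] :=
  ((cardLambda L)^-1)%:C *
  \sum_(y : {ffun 'I_nu -> 'I_(2 * L)})
     (f (gam omega lam (dualpt y)))%:C *
     cexpi (dotk (dualpt y) x - 2 * gam omega lam (dualpt y) * t).

Definition h1 (omega : R) (lam : 'I_nu -> R) (L : nat) (t : R)
    (x : 'I_nu -> int) : R[i] :=
  'i * ((@complex.Im R (lsum omega lam L (fun g => g + g^-1) t x)) / 2)%:C
  + (@complex.Re R (lsum omega lam L (fun _ => 1) t x))%:C.

Definition h2 (omega : R) (lam : 'I_nu -> R) (L : nat) (t : R)
    (x : 'I_nu -> int) : R[i] :=
  'i * ((@complex.Im R (lsum omega lam L (fun g => g - g^-1) t x)) / 2)%:C.

Definition l1norm (x : 'I_nu -> int) : R := \sum_(j < nu) (`|x j|)%:~R.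

Definition hbound (omega : R) (lam : 'I_nu -> R) (mu t : R)
    (x : 'I_nu -> int) : R :=
  let c := cwl omega lam in
  (1 + c * expR (mu / 2) / 2 + c^-1 / 2) *
  expR (- mu * (l1norm x - c * Num.max (2 / mu) (expR (mu / 2 + 1)) * `|t|)).

End Defs.

(* Write phi = k . x.  The reflection k |-> -k of the dual lattice preserves gamma
   and flips the sign of sin phi, so the real and imaginary parts of the lattice sums
   are averages of u (gamma) cos phi, for u g = cos (2 g t), g sin (2 g t) and
   sin (2 g t) / g.  As gamma^2 is affine in the cos k_j, the average of
   gamma^(2n) cos phi vanishes for n < |x| (a character sum over the dual lattice).
   Hence in the power series of cos (2 gamma t) and gamma sin (2 gamma t) only the
   orders p >= 2|x| survive, each bounded by (2 c |t|)^p / p!; weighting them by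
   e^(theta (p - 2|x|)) >= 1 gives exp (2 c |t| e^theta - 2 theta |x|), and
   theta = mu / 2 or theta = 1 gives the stated velocity.  Finally sin (2 gamma t) / gamma
   is a time integral of cos (2 gamma t) and inherits its bound divided by the velocity. *)

From HB Require Import structures.
From mathcomp Require Import all_boot all_order all_algebra.
From mathcomp Require Import all_classical all_reals all_analysis.
From mathcomp Require Import complex.
From mathcomp Require Import ring lra zify.
Set Implicit Arguments.
Unset Strict Implicit.
Unset Printing Implicit Defensive.

Import Order.TTheory GRing.Theory Num.Theory numFieldNormedType.Exports.
Local Open Scope ring_scope.

Section ExponentialBounds.
Variable R : realType.

Lemma partial_sum_exp_le (y : R) (M : nat) : 0 <= y ->
  \sum_(m < M) y ^+ m / m`!%:R <= expR y.
Proof.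
move=> y0.
have nd : nondecreasing_seq (series (exp_coeff y)).
  apply/nondecreasing_seqP => n; rewrite /series /= big_nat_recr //= lerDl.
  by rewrite /exp_coeff /= divr_ge0 // exprn_ge0.
have := nondecreasing_cvgn_le nd (is_cvg_series_exp_coeff y) M.
by rewrite /series /= big_mkord.
Qed.

Lemma partial_sum_exp_parity_le (b : bool) (y : R) (M : nat) : 0 <= y ->
  \sum_(k < M) y ^+ (b + k.*2) / (b + k.*2)`!%:R <= expR y.
Proof.
move=> y0; apply: le_trans (@partial_sum_exp_le y M.*2 y0).
have term_ge0 m : 0 <= y ^+ m / m`!%:R by rewrite divr_ge0 // exprn_ge0.
elim: M => [|M IH]; first by rewrite !big_ord0.
rewrite big_ord_recr doubleS !big_ord_recr /= -addrA lerD //.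
by case: b {IH}; rewrite ?add0n ?add1n ?lerDl ?lerDr.
Qed.

Lemma norm_wsum_lim_le (I : finType) (w : I -> R) (u : I -> nat -> R)
    (l : I -> R) (B : R) :
  (forall i, (u i @ \oo --> l i)%classic) ->
  (forall n, `|\sum_i w i * u i n| <= B) -> `|\sum_i w i * l i| <= B.
Proof.
move=> cvg_u bound_u.
have cvg_sum : (\sum_i w i * u i n @[n --> \oo] --> \sum_i w i * l i)%classic.
  apply: cvg_big => [|i _]; first exact: add_continuous.
  exact: cvgMr.
rewrite -(cvg_lim _ (cvg_norm cvg_sum)) //.
apply: limr_le; first by apply/cvg_ex; eexists; exact: cvg_norm cvg_sum.
exact: nearW.
Qed.

(* A term of order p whose coefficient vanishes below order D - e is
   dominated by the same term weighted by expR (th * (p + e - D)) >= 1. *)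
Lemma taylor_term_le (th T C f : R) (D p e : nat) :
  0 <= th -> 0 <= T -> 0 <= C -> 0 <= f -> f <= C ^+ e * C ^+ p ->
  ((p + e < D)%N -> f = 0) ->
  T ^+ p / p`!%:R * f <=
    C ^+ e * (expR (th * e%:R - th * D%:R) * ((expR th * (T * C)) ^+ p / p`!%:R)).
Proof.
move=> th0 T0 C0 f0 f_le f_eq0.
have fact_gt0 : 0 < (p`!%:R : R) by rewrite ltr0n fact_gt0.
have [pD|Dp] := ltnP (p + e) D.
  by rewrite f_eq0 // mulr0 !mulr_ge0 ?exprn_ge0 ?expR_ge0 ?divr_ge0 ?mulr_ge0
    ?expR_ge0 // ltW.
have expR_shift : expR (th * e%:R - th * D%:R) * (expR th * (T * C)) ^+ p =
    expR (th * (p + e)%:R - th * D%:R) * (T * C) ^+ p.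
  rewrite exprMn -expRM_natl mulrA -expRD natrD; congr (expR _ * _); ring.
have -> : C ^+ e * (expR (th * e%:R - th * D%:R) * ((expR th * (T * C)) ^+ p / p`!%:R)) =
    C ^+ e * (T ^+ p * C ^+ p) / p`!%:R * expR (th * (p + e)%:R - th * D%:R).
  transitivity
    (C ^+ e * ((expR (th * e%:R - th * D%:R) * (expR th * (T * C)) ^+ p) / p`!%:R)).
    by ring.
  by rewrite expR_shift exprMn; ring.
apply: (@le_trans _ _ (C ^+ e * (T ^+ p * C ^+ p) / p`!%:R)).
  rewrite [leRHS](_ : _ = T ^+ p / p`!%:R * (C ^+ e * C ^+ p)); last by ring.
  by rewrite ler_wpM2l // divr_ge0 ?exprn_ge0 // ltW.
rewrite ler_peMr ?divr_ge0 ?mulr_ge0 ?exprn_ge0 ?(ltW fact_gt0) //.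
by apply: le_trans (expR_ge1Dx _); rewrite lerDl subr_ge0 ler_wpM2l // ler_nat.
Qed.

Definition speed (mu : R) := mu * Num.max (2 / mu) (expR (mu / 2 + 1)) / 2.

Lemma speed_ge1 mu : 0 < mu -> 1 <= speed mu.
Proof.
move=> mu0; rewrite /speed.
have : mu * (2 / mu) / 2 <= mu * Num.max (2 / mu) (expR (mu / 2 + 1)) / 2.
  by rewrite ler_pM2r // ler_pM2l // le_max lexx.
by rewrite mulrCA divff ?gt_eqF // mulr1 divff.
Qed.

Lemma speed_ge_expR mu : 0 < mu -> 2 <= mu * expR 1 -> expR (mu / 2) <= speed mu.
Proof.
move=> mu0 mue; rewrite /speed.
apply: (@le_trans _ _ (mu * expR (mu / 2 + 1) / 2)).
  have : expR (mu / 2) * 2 <= expR (mu / 2) * (mu * expR 1) by rewrite ler_pM2l ?expR_gt0.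
  by rewrite expRD ler_pdivlMr //; lra.
by rewrite ler_pM2r // ler_pM2l // le_max lexx orbT.
Qed.

(* Not the infimum over theta: theta = mu / 2 is used when mu e >= 2,
   otherwise theta = 1 or the trivial bound p <= 1. *)
Lemma le_expR_speed (mu s d p : R) : 0 < mu -> 0 <= s -> p <= 1 ->
  (forall th, 0 <= th -> p <= expR (expR th * s - 2 * th * d)) ->
  p <= expR (speed mu * s - mu * d).
Proof.
move=> mu0 s0 p1 p_le.
have K1 := @speed_ge1 mu mu0.
have Ks : s <= speed mu * s by rewrite ler_peMl.
have [mue|mue] := leP 2 (mu * expR 1).
  apply: (le_trans (p_le (mu / 2) _)); first by rewrite divr_ge0 // ltW.
  have : expR (mu / 2) * s <= speed mu * s by rewrite ler_wpM2r // speed_ge_expR.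
  have -> : 2 * (mu / 2) * d = mu * d by field.
  by rewrite ler_expR; lra.
have [sd|sd] := leP (mu * d) s.
  by apply: (le_trans p1); rewrite -expR0 ler_expR; lra.
apply: (le_trans (p_le 1 ler01)); rewrite ler_expR mulr1.
have e1 : 1 <= expR (1 : R) by rewrite -expR0 ler_expR.
have d0 : 0 <= d by rewrite -(pmulr_rge0 _ mu0); lra.
have f1 : 0 <= (expR 1 - 1) * (mu * d - s) by rewrite mulr_ge0 // subr_ge0 // ltW.
have f2 : 0 <= (speed mu - 1) * s by rewrite mulr_ge0 // subr_ge0.
have f3 : 0 <= (2 - mu * expR 1) * d by rewrite mulr_ge0 // subr_ge0 ltW.
nra.
Qed.

End ExponentialBounds.

Section DerivativeComparison.
Variable R : realType.

Lemma nondecreasing_of_derive_ge0 (f df : R -> R) (a b : R) :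
  (forall x : R, is_derive x (1 : R) f (df x)) -> (forall x, a < x < b -> 0 <= df x) ->
  a <= b -> f a <= f b.
Proof.
move=> f_df df_ge0 ab.
apply: (@ger0_derive1_ndecr R f a b) => //.
- by move=> x; rewrite in_itv /= derive1E derive_val; exact: df_ge0.
- apply: continuous_subspaceT => x.
  by apply/differentiable_continuous/derivable1_diffP; case: (f_df x).
Qed.

Lemma norm_le_of_derive (Phi dPhi : R -> R) (A B : R) : 0 < A ->
  (forall u : R, is_derive u (1 : R) Phi (dPhi u)) -> Phi 0 = 0 ->
  (forall u, 0 <= u -> `|dPhi u| <= expR (A * u - B)) ->
  forall t, 0 <= t -> `|Phi t| <= expR (A * t - B) / A.
Proof.
move=> A0 Phi_d Phi0 dPhi_le t t0.
pose Psi u := expR (A * u - B) / A.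
have Psi_d (u : R) : is_derive u (1 : R) Psi (expR (A * u - B)).
  have lin : is_derive u (1 : R) (fun z : R => A * z - B) A.
    have : is_derive u (1 : R) (fun z : R => A * z - B) (A * 1 - 0).
      by typeclasses eauto.
    by rewrite mulr1 subr0.
  have -> : Psi = A^-1 \*: (expR \o (fun z : R => A * z - B)).
    by apply/funext => z; rewrite /Psi /= mulrC.
  have := @is_deriveZ R R^o R^o _ A^-1 u 1 _
    (@is_derive1_comp R expR (fun z => A * z - B) u _ _ (is_derive_expR _) lin).
  by move=> /is_derive_eq; apply; rewrite /GRing.scale /= mulrCA mulVf ?mulr1 ?gt_eqF.
have PsiB : Psi 0 - Phi 0 <= Psi t - Phi t.
  apply: (@nondecreasing_of_derive_ge0 (Psi - Phi)
    (fun u => expR (A * u - B) - dPhi u)) => //.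
  move=> u /andP[u0 _]; rewrite subr_ge0.
  exact: le_trans (ler_norm _) (dPhi_le u (ltW u0)).
have PsiD : Psi 0 + Phi 0 <= Psi t + Phi t.
  apply: (@nondecreasing_of_derive_ge0 (Psi + Phi)
    (fun u => expR (A * u - B) + dPhi u)) => //.
  move=> u /andP[u0 _]; rewrite -lerBlDr sub0r.
  by apply: le_trans (dPhi_le u (ltW u0)); rewrite -normrN ler_norm.
have Psi0 : 0 <= Psi 0 by rewrite divr_ge0 ?expR_ge0 // ltW.
move: PsiB PsiD; rewrite Phi0 subr0 addr0 => PsiB PsiD.
by rewrite ler_norml; apply/andP; split; rewrite /Psi in PsiB PsiD Psi0 *; lra.
Qed.

Lemma is_derive_sum_sin (I : Type) (s : seq I) (w a : I -> R) (u : R) :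
  is_derive u (1 : R) (fun z => \sum_(i <- s) w i * sin (a i * z))
    (\sum_(i <- s) w i * (cos (a i * u) * a i)).
Proof.
elim: s => [|i s IH].
  under eq_fun do rewrite big_nil.
  by rewrite big_nil; exact: is_derive_cst.
under eq_fun do rewrite big_cons.
rewrite big_cons; apply: (is_deriveD (f := fun z => w i * sin (a i * z))) => //.
have lin : is_derive u (1 : R) (fun z : R => a i * z) (a i).
  by have := is_deriveZ (a i) (is_derive_id u (1 : R)); rewrite /GRing.scale /= mulr1.
exact: (@is_deriveZ R R^o R^o _ (w i) u 1 _
  (@is_derive1_comp R sin (fun z => a i * z) u _ _ (is_derive_sin _) lin)).
Qed.

End DerivativeComparison.

Section Complex.
Variable R : realType.

Lemma cexpi0 : cexpi (0 : R) = 1.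
Proof. by rewrite /cexpi cos0 sin0. Qed.

Lemma cexpiD (a b : R) : cexpi (a + b) = cexpi a * cexpi b.
Proof.
rewrite /cexpi cosD sinD.
have -> : ((cos a +i* sin a) * (cos b +i* sin b))%C =
  Complex (cos a * cos b - sin a * sin b) (cos a * sin b + sin a * cos b) by [].
by congr Complex; ring.
Qed.

Lemma cexpi_sum (I : Type) (s : seq I) (f : I -> R) :
  cexpi (\sum_(i <- s) f i) = \prod_(i <- s) cexpi (f i).
Proof. exact: (big_morph _ cexpiD cexpi0). Qed.

Lemma cexpiMn (a : R) (n : nat) : cexpi (n%:R * a) = cexpi a ^+ n.
Proof.
elim: n => [|n IH]; first by rewrite mul0r cexpi0 expr0.
by rewrite -addn1 natrD mulrDl mul1r cexpiD IH exprD expr1.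
Qed.

Lemma cexpiD2piz (a : R) (m : int) : cexpi (a + 2 * pi * m%:~R) = cexpi a.
Proof.
have D2pin (b : R) (n : nat) : cexpi (b + 2 * pi * n%:R) = cexpi b.
  have -> : 2 * (pi : R) * n%:R = pi *+ 2 *+ n by ring.
  by rewrite /cexpi (periodicn (@cosD2pi R)) (periodicn (@sinD2pi R)).
case: m => n; first exact: D2pin.
by rewrite NegzE intrN mulrN -(D2pin _ n.+1) subrK.
Qed.

Lemma cexpi_neq1 (rho Lr : R) : 0 < Lr -> 0 < rho < 2 * Lr ->
  cexpi (pi * rho / Lr) != 1.
Proof.
move=> L0 /andP[r0 r2].
set th := pi * rho / Lr.
have thL : th * Lr = pi * rho by rewrite /th mulfVK ?gt_eqF.
have pi0 := @pi_gt0 R.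
apply/negP => /eqP th1.
have sin0 : sin th = 0 by case: th1.
have cos1 : cos th = 1 by case: th1.
have [rL|rL|rL] := ltgtP rho Lr.
- have : 0 < sin th by apply: sin_gt0_pi; apply/andP; split; nra.
  by rewrite sin0 ltxx.
- have : 0 < sin (th - pi) by apply: sin_gt0_pi; apply/andP; split; nra.
  have := sinDpi (th - pi); rewrite subrK sin0 => /esym/eqP.
  by rewrite oppr_eq0 => /eqP ->; rewrite ltxx.
- have thpi : th = pi by apply: (mulIf (x := Lr)); rewrite ?gt_eqF // thL rL.
  by move: cos1; rewrite thpi cospi; lra.
Qed.

Lemma normc_le (a b : R) : Normc.normc (a +i* b)%C <= `|a| + `|b|.
Proof.
have ab_ge0 : 0 <= `|a| + `|b| by rewrite addr_ge0.
rewrite /Normc.normc -(ger0_norm ab_ge0) -sqrtr_sqr ler_sqrt ?sqr_ge0 //.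
rewrite -[a ^+ 2]real_normK ?num_real // -[b ^+ 2]real_normK ?num_real //.
have : 0 <= `|a| * `|b| by rewrite mulr_ge0.
by rewrite sqrrD; lra.
Qed.

Lemma Re_scale (a : R) (z : R[i]) : complex.Re (a%:C%C * z) = a * complex.Re z.
Proof. by case: z => u v /=; rewrite mul0r subr0. Qed.

Lemma Im_scale (a : R) (z : R[i]) : complex.Im (a%:C%C * z) = a * complex.Im z.
Proof. by case: z => u v /=; rewrite mul0r addr0. Qed.

End Complex.

Section DualLatticeSums.
Variables (R : realType) (nu L : nat).
Hypothesis L_gt0 : (0 < L)%N.
Local Notation Y := {ffun 'I_nu -> 'I_(2 * L)}.

Definition latcoord (r : 'I_(2 * L)) : int := (r : nat)%:Z - L%:Z + 1.

Lemma natrL_neq0 : (L%:R : R) != 0.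
Proof. by rewrite pnatr_eq0 -lt0n. Qed.

Lemma sum_cexpi_latcoord (z : int) : ~~ ((2 * L)%:Z %| z)%Z ->
  \sum_(r < 2 * L) cexpi (pi * (latcoord r)%:~R / L%:R * z%:~R) = 0 :> R[i].
Proof.
move=> ndvd_z.
set be : R := pi * z%:~R / L%:R.
set al : R := pi * (1 - L%:Z)%:~R / L%:R * z%:~R.
have geometric (r : 'I_(2 * L)) :
    pi * (latcoord r)%:~R / L%:R * z%:~R = al + (r : nat)%:R * be.
  rewrite /latcoord /al /be !intrD !intrN.
  by field; exact: natrL_neq0.
under eq_bigr do rewrite geometric cexpiD cexpiMn.
rewrite -mulr_sumr.
suff -> : \sum_(i < 2 * L) cexpi be ^+ i = 0 by rewrite mulr0.
have root1 : cexpi be ^+ (2 * L) = 1.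
  rewrite -cexpiMn (_ : _ * be = 0 + 2 * pi * z%:~R) ?cexpiD2piz ?cexpi0 //.
  by rewrite /be natrM; field; exact: natrL_neq0.
have neq1 : cexpi be != 1.
  have L2 : (0 < (2 * L)%:Z)%R by rewrite ltz_nat muln_gt0.
  set r := (z %% (2 * L)%:Z)%Z.
  have r_ge0 : (0 <= r)%R by rewrite modz_ge0 // gt_eqF.
  have r_lt : (r < (2 * L)%:Z)%R by rewrite ltz_pmod.
  have r_neq0 : r != 0 by apply: contra ndvd_z => /eqP r0; apply/dvdz_mod0P.
  have -> : be = pi * r%:~R / L%:R + 2 * pi * (z %/ (2 * L)%:Z)%Z%:~R.
    rewrite /be {1}(divz_eq z ((2 * L)%:Z)) intrD intrM -/r.
    have -> : ((2 * L)%:Z)%:~R = 2 * L%:R :> R by rewrite -natrM.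
    by field; exact: natrL_neq0.
  rewrite cexpiD2piz cexpi_neq1 ?ltr0n //.
  rewrite ltr0z lt_neqAle eq_sym r_neq0 r_ge0 /=.
  have : r%:~R < ((2 * L)%:Z)%:~R :> R by rewrite ltr_int.
  by rewrite [X in _ < X -> _](_ : _ = 2 * L%:R) // -natrM.
have : (cexpi be - 1) * \sum_(i < 2 * L) cexpi be ^+ i = 0.
  by rewrite -subrX1 root1 subrr.
by move/eqP; rewrite mulf_eq0 subr_eq0 (negbTE neq1) => /eqP.
Qed.

Lemma sum_cexpi_dual (z : 'I_nu -> int) j : ~~ ((2 * L)%:Z %| z j)%Z ->
  \sum_(y : Y) cexpi (dotk (dualpt R y) z) = 0.
Proof.
move=> ndvd_z.
under eq_bigr do rewrite /dotk cexpi_sum.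
rewrite -(bigA_distr_bigA (fun j r => cexpi (pi * (latcoord r)%:~R / L%:R * (z j)%:~R))).
by rewrite (bigD1 j) //= sum_cexpi_latcoord // mul0r.
Qed.

Lemma sum_cos_dual (z : 'I_nu -> int) j : ~~ ((2 * L)%:Z %| z j)%Z ->
  \sum_(y : Y) cos (dotk (dualpt R y) z) = 0.
Proof. by move/sum_cexpi_dual/(congr1 (@complex.Re R)); rewrite raddf_sum. Qed.

End DualLatticeSums.

Lemma sin_half_sqr (R : realType) (a : R) : 4 * sin (a / 2) ^+ 2 = 2 - 2 * cos a.
Proof.
have -> : cos a = cos ((a / 2) *+ 2) by congr cos; rewrite mulr2n; field.
by rewrite cos_mulr2n sin2cos2 mulr2n; ring.
Qed.

Section Locality.
Variables (R : realType) (nu : nat) (omega : R) (lam : 'I_nu -> R) (L : nat).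
Hypothesis L_gt0 : (0 < L)%N.
Hypothesis lam_ge0 : forall j, 0 <= lam j.
Local Notation Y := {ffun 'I_nu -> 'I_(2 * L)}.

Definition gam2 (y : Y) := gam omega lam (dualpt R y) ^+ 2.

Definition moment (n : nat) (z : 'I_nu -> int) :=
  \sum_(y : Y) gam2 y ^+ n * cos (dotk (dualpt R y) z).

Definition shift (z : 'I_nu -> int) (j : 'I_nu) (e : int) : 'I_nu -> int :=
  fun i => z i + (i == j)%:Z * e.

Lemma dotk_shift (k : 'I_nu -> R) z j e :
  dotk k (shift z j e) = dotk k z + k j * e%:~R.
Proof.
rewrite /dotk /shift.
under eq_bigr do rewrite intrD mulrDr.
rewrite big_split /=; congr (_ + _).
rewrite (bigD1 j) //= eqxx mul1r big1 ?addr0 // => i /negbTE ->.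
by rewrite mul0r mulr0.
Qed.

Definition gam2_mean := omega ^+ 2 + 2 * \sum_j lam j.

Lemma gam2E (y : Y) : gam2 y = gam2_mean - \sum_j 2 * lam j * cos (dualpt R y j).
Proof.
have rad_ge0 : 0 <= omega ^+ 2 + 4 * \sum_j lam j * sin (dualpt R y j / 2) ^+ 2.
  by rewrite addr_ge0 ?sqr_ge0 // mulr_ge0 // sumr_ge0 // => j _; rewrite mulr_ge0 ?sqr_ge0.
rewrite /gam2 /gam sqr_sqrtr // /gam2_mean !mulr_sumr -addrA; congr (_ + _).
by rewrite -sumrB; apply: eq_bigr => j _; rewrite mulrCA sin_half_sqr; ring.
Qed.

(* gamma^2 = gam2_mean - sum_j lam_j (e^{i k_j} + e^{-i k_j}), so multiplying
   by gamma^2 averages cos (k . z) over the nearest neighbours of z. *)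
Lemma momentS n z : moment n.+1 z =
  gam2_mean * moment n z -
  \sum_j lam j * (moment n (shift z j 1) + moment n (shift z j (-1))).
Proof.
rewrite /moment.
transitivity (\sum_(y : Y) (gam2_mean * (gam2 y ^+ n * cos (dotk (dualpt R y) z)) -
   \sum_j lam j * (gam2 y ^+ n * cos (dotk (dualpt R y) (shift z j 1)) +
                   gam2 y ^+ n * cos (dotk (dualpt R y) (shift z j (-1)))))).
  apply: eq_bigr => y _.
  rewrite exprS gam2E -mulrA mulrBl mulr_suml; congr (_ - _).
  apply: eq_bigr => j _.
  rewrite !dotk_shift mulr1 intrN mulrN1 cosD cosB; ring.
rewrite sumrB -mulr_sumr; congr (_ - _).
rewrite exchange_big /=; apply: eq_bigr => j _.
by rewrite -mulr_sumr -big_split.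
Qed.

Definition far_from_periods (n : nat) (z : 'I_nu -> int) :=
  forall m : 'I_nu -> int, (\sum_j `|m j| <= n)%N ->
  exists j, ~~ ((2 * L)%:Z %| z j + m j)%Z.

Lemma far_from_periodsW n z : far_from_periods n.+1 z -> far_from_periods n z.
Proof. by move=> far m m_le; apply: far; apply: leq_trans m_le _. Qed.

Lemma far_from_periods_shift n z j e : (`|e| <= 1)%N ->
  far_from_periods n.+1 z -> far_from_periods n (shift z j e).
Proof.
move=> e_le far m m_le.
have sum_delta : (\sum_(i < nu) (i == j) = 1)%N.
  by rewrite (bigD1 j) //= eqxx big1 // => i /negbTE ->.
have shift_le : (\sum_i `|shift m j e i| <= n.+1)%N.
  apply: (@leq_trans (\sum_i (`|m i| + (i == j))%N)).
    by apply: leq_sum => i _; rewrite /shift; case: (i == j) => /=; lia.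
  by rewrite big_split /= sum_delta addn1.
have [i ndvd] := far _ shift_le.
by exists i; rewrite /shift addrAC -addrA.
Qed.

Lemma moment_far n z : far_from_periods n z -> moment n z = 0.
Proof.
elim: n z => [|n IH] z far.
  have zero_le : (\sum_j `|(fun _ : 'I_nu => 0%:Z) j| <= 0)%N by rewrite big1.
  have [j] := far _ zero_le; rewrite addr0 => ndvd.
  by rewrite /moment; under eq_bigr do rewrite expr0 mul1r; exact: sum_cos_dual ndvd.
rewrite momentS (IH z (@far_from_periodsW n z far)) mulr0 sub0r big1 ?oppr0 // => j _.
by rewrite !IH ?addr0 ?mulr0 //; apply: far_from_periods_shift.
Qed.

Lemma far_from_periods_inLambda x n : inLambda L x ->
  (n < \sum_j `|x j|)%N -> far_from_periods n x.
Proof.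
move=> x_in n_lt m m_le.
case: (boolP [exists j, (`|m j| < `|x j|)%N]) => [/existsP[j mx] | /existsPn mx].
  exists j; apply/negP => /dvdzP[q xm].
  have /andP[x_gt x_le] := x_in j.
  have [q0|[q_ge|q_le]] : q = 0 \/ (1 <= q)%R \/ (q <= -1)%R by lia.
  - by move: xm; rewrite q0 mul0r; lia.
  - have : ((2 * L)%:Z <= q * (2 * L)%:Z)%R by rewrite -{1}(mul1r ((2 * L)%:Z)) ler_wpM2r.
    by lia.
  - have : (q * (2 * L)%:Z <= - (2 * L)%:Z)%R by rewrite -mulN1r ler_wpM2r.
    by lia.
have : (\sum_j `|x j| <= \sum_j `|m j|)%N.
  by apply: leq_sum => j _; rewrite leqNgt mx.
by lia.
Qed.

End Locality.

Section Reflection.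
Variables (R : realType) (nu : nat) (omega : R) (lam : 'I_nu -> R) (L : nat).
Hypothesis L_gt0 : (0 < L)%N.
Local Notation Y := {ffun 'I_nu -> 'I_(2 * L)}.

Lemma mirror_subproof (r : 'I_(2 * L)) : (2 * L - 2 - r < 2 * L)%N.
Proof. by have := L_gt0; lia. Qed.

(* k |-> -k on the dual lattice; the coordinate pi (r = 2L - 1) is fixed
   since -pi = pi modulo 2 pi. *)
Definition mirror (r : 'I_(2 * L)) : 'I_(2 * L) :=
  if (r : nat) == (2 * L).-1 then r else Ordinal (mirror_subproof r).

Lemma val_mirror (r : 'I_(2 * L)) :
  mirror r = (if (r : nat) == (2 * L).-1 then r : nat else 2 * L - 2 - r)%N :> nat.
Proof. by rewrite /mirror; case: ifP. Qed.

Lemma mirrorK : involutive mirror.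
Proof.
move=> r; apply: val_inj; rewrite /= !val_mirror.
have r_lt := ltn_ord r; have L0 := L_gt0.
have [top|/eqP ntop] := eqVneq (r : nat) (2 * L).-1; first by rewrite top eqxx.
by rewrite ifF; [lia | apply/eqP; lia].
Qed.

Lemma latcoord_mirror (r : 'I_(2 * L)) : latcoord (mirror r) =
  if (r : nat) == (2 * L).-1 then latcoord r else - latcoord r.
Proof.
rewrite /latcoord val_mirror; have := ltn_ord r; have := L_gt0.
by case: ifP => // /negbT/eqP; lia.
Qed.

Lemma latcoord_top (r : 'I_(2 * L)) : (r : nat) == (2 * L).-1 -> latcoord r = L%:Z.
Proof. by rewrite /latcoord => /eqP ->; have := L_gt0; lia. Qed.

Definition mirror_dual (y : Y) : Y := [ffun j => mirror (y j)].

Lemma mirror_dual_inj : injective mirror_dual.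
Proof.
apply: (can_inj (g := mirror_dual)) => y.
by apply/ffunP => j; rewrite !ffunE mirrorK.
Qed.

Lemma gam_mirror_dual (y : Y) :
  gam omega lam (dualpt R (mirror_dual y)) = gam omega lam (dualpt R y).
Proof.
rewrite /gam; congr (Num.sqrt (_ + 4 * _)); apply: eq_bigr => j _.
rewrite /dualpt /latpt ffunE -!/(latcoord _) latcoord_mirror.
by case: ifP => // _; rewrite intrN mulrN !mulNr sinN sqrrN.
Qed.

Lemma dotk_mirror_dual (y : Y) (x : 'I_nu -> int) :
  dotk (dualpt R (mirror_dual y)) x = - dotk (dualpt R y) x +
     2 * pi * (\sum_j (((y j : nat) == (2 * L).-1)%:Z * x j))%:~R.
Proof.
rewrite /dotk -sumrN raddf_sum /= mulr_sumr -big_split /=.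
apply: eq_bigr => j _.
rewrite /dualpt /latpt ffunE -!/(latcoord _) latcoord_mirror intrM.
case: ifP => [top|_]; last by rewrite intrN /=; ring.
rewrite (@latcoord_top (y j) top) /=.
by field; rewrite pnatr_eq0 -lt0n.
Qed.

Lemma sin_dotk_mirror_dual (y : Y) x :
  sin (dotk (dualpt R (mirror_dual y)) x) = - sin (dotk (dualpt R y) x).
Proof.
rewrite dotk_mirror_dual -sinN.
set m := (\sum_j _)%R.
by have := @cexpiD2piz R (- dotk (dualpt R y) x) m => -[].
Qed.

Lemma sum_sin_dual (F : R -> R) x :
  \sum_(y : Y) F (gam omega lam (dualpt R y)) * sin (dotk (dualpt R y) x) = 0.
Proof.
set S := \sum_(y : Y) _.
have : S = - S.
  rewrite {1}/S (reindex_inj mirror_dual_inj) /= /S -sumrN.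
  by apply: eq_bigr => y _; rewrite gam_mirror_dual sin_dotk_mirror_dual mulrN.
by move/eqP; rewrite -subr_eq0 opprK -mulr2n -mulr_natr mulf_eq0 pnatr_eq0 orbF => /eqP.
Qed.

End Reflection.

Section Bounds.
Variables (R : realType) (nu : nat) (omega : R) (lam : 'I_nu -> R) (L : nat).
Hypothesis L_gt0 : (0 < L)%N.
Hypothesis omega_gt0 : 0 < omega.
Hypothesis lam_ge0 : forall j, 0 <= lam j.
Variable x : 'I_nu -> int.
Hypothesis x_in : inLambda L x.
Local Notation Y := {ffun 'I_nu -> 'I_(2 * L)}.
Local Notation N := (cardLambda R nu L).
Local Notation G y := (gam omega lam (dualpt R y)).
Local Notation ph y := (dotk (dualpt R y) x).
Local Notation c := (cwl omega lam).
Local Notation moment_x n := (moment omega lam L n x).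

Definition cos_avg (u : R -> R) := N^-1 * \sum_(y : Y) u (G y) * cos (ph y).

Lemma eq_cos_avg u v : u =1 v -> cos_avg u = cos_avg v.
Proof. by move=> uv; rewrite /cos_avg; under eq_bigr do rewrite uv. Qed.

Lemma cos_avgD u v : cos_avg (fun g => u g + v g) = cos_avg u + cos_avg v.
Proof.
rewrite /cos_avg -mulrDr -big_split; congr (_ * _).
by apply: eq_bigr => y _; rewrite mulrDl.
Qed.

Lemma cos_avgZ a u : cos_avg (fun g => a * u g) = a * cos_avg u.
Proof.
rewrite /cos_avg mulrCA [in RHS]mulr_sumr; congr (_ * _).
by apply: eq_bigr => y _ /=; rewrite mulrA.
Qed.

Lemma cardLambda_gt0 : 0 < N.
Proof. by rewrite /cardLambda ltr0n expn_gt0 muln_gt0 L_gt0. Qed.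

Lemma gam_gt0 (y : Y) : 0 < G y.
Proof.
rewrite /gam sqrtr_gt0 ltr_pwDl ?exprn_gt0 //.
by rewrite mulr_ge0 // sumr_ge0 // => j _; rewrite mulr_ge0 ?sqr_ge0.
Qed.

Lemma gam_le_cwl (y : Y) : G y <= c.
Proof.
rewrite /gam /cwl ler_sqrt; last by rewrite addr_ge0 ?sqr_ge0 // mulr_ge0 // sumr_ge0.
rewrite lerD2l ler_pM2l // ler_sum // => j _.
by rewrite -[leRHS]mulr1 ler_wpM2l // sin2cos2 gerBl sqr_ge0.
Qed.

Lemma cwl_gt0 : 0 < c.
Proof. by rewrite /cwl sqrtr_gt0 ltr_pwDl ?exprn_gt0 // mulr_ge0 // sumr_ge0. Qed.

Lemma Re_lsum f t :
  complex.Re (lsum omega lam L f t x) = cos_avg (fun g => f g * cos (2 * g * t)).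
Proof.
rewrite /lsum Re_scale raddf_sum /= /cos_avg; congr (_ * _).
under eq_bigr do rewrite mul0r subr0 cosB.
transitivity (\sum_(y : Y) f (G y) * cos (2 * G y * t) * cos (ph y) +
              \sum_(y : Y) f (G y) * sin (2 * G y * t) * sin (ph y)).
  by rewrite -big_split; apply: eq_bigr => y _ /=; ring.
by rewrite (@sum_sin_dual R nu omega lam L L_gt0 (fun g => f g * sin (2 * g * t))) addr0.
Qed.

Lemma Im_lsum f t :
  complex.Im (lsum omega lam L f t x) = - cos_avg (fun g => f g * sin (2 * g * t)).
Proof.
rewrite /lsum Im_scale raddf_sum /= /cos_avg -mulrN; congr (_ * _).
under eq_bigr do rewrite mul0r addr0 sinB.
transitivity (\sum_(y : Y) f (G y) * cos (2 * G y * t) * sin (ph y) -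
              \sum_(y : Y) f (G y) * sin (2 * G y * t) * cos (ph y)).
  by rewrite -sumrB; apply: eq_bigr => y _ /=; ring.
by rewrite (@sum_sin_dual R nu omega lam L L_gt0 (fun g => f g * cos (2 * g * t))) sub0r.
Qed.

Definition xnorm := (\sum_j `|x j|)%N.

Lemma l1norm_dx : l1norm R x = xnorm%:R.
Proof. by rewrite /l1norm /xnorm natr_sum; apply: eq_bigr => j _; rewrite natr_absz. Qed.

Lemma moment_x_eq0 n : (n < xnorm)%N -> moment_x n = 0.
Proof.
move=> n_lt; apply: (moment_far omega L_gt0 lam_ge0).
exact: (far_from_periods_inLambda L_gt0 x_in n_lt).
Qed.

Lemma norm_cos_avg_le (u : R -> R) (B : R) :
  (forall g, 0 < g <= c -> `|u g| <= B) -> `|cos_avg u| <= B.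
Proof.
move=> u_le.
rewrite /cos_avg normrM ger0_norm ?invr_ge0 ?(ltW cardLambda_gt0) //.
rewrite ler_pdivrMl ?cardLambda_gt0 //.
apply: (le_trans (ler_norm_sum _ _ _)).
rewrite [leRHS](_ : _ = \sum_(y : Y) B); last first.
  by rewrite sumr_const /cardLambda card_ffun !card_ord mulr_natl.
apply: ler_sum => y _; rewrite normrM -[leRHS]mulr1 ler_pM ?cos_max //.
by apply: u_le; rewrite gam_gt0 gam_le_cwl.
Qed.

Lemma cos_avg_moment n : cos_avg (fun g => g ^+ n.*2) = N^-1 * moment_x n.
Proof.
rewrite /cos_avg /moment; congr (_ * _).
by apply: eq_bigr => y _; rewrite /gam2 -exprM mul2n.
Qed.

Lemma norm_avg_moment_le n : `|N^-1 * moment_x n| <= c ^+ n.*2.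
Proof.
rewrite -cos_avg_moment; apply: norm_cos_avg_le => g /andP[g0 gc].
rewrite ger0_norm ?exprn_ge0 ?(ltW g0) //.
by apply: lerXn2r; rewrite // nnegrE ltW // cwl_gt0.
Qed.

Definition trig (b : bool) : R -> R := if b then sin else cos.

Lemma trig_series (b : bool) (z : R) :
  ((fun M => \sum_(k < M) (-1) ^+ k * z ^+ (b + k.*2) / (b + k.*2)`!%:R)
     @ \oo --> trig b z)%classic.
Proof.
have -> : (fun M => \sum_(k < M) (-1) ^+ k * z ^+ (b + k.*2) / (b + k.*2)`!%:R) =
    series (if b then sin_coeff' z else cos_coeff' z).
  by apply/funext => M; rewrite /series /= big_mkord; case: b.
by case: b; [exact: cvg_sin_coeff' | exact: cvg_cos_coeff'].
Qed.

(* Only the moments of order >= |x| survive in the Taylor expansion. *)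
Lemma norm_cos_avg_trig_le (b : bool) t th : 0 <= th ->
  `|cos_avg (fun g => g ^+ b * trig b (2 * g * t))| <=
    c ^+ b * expR (th * b%:R + expR th * (2 * `|t| * c) - th * (xnorm.*2)%:R).
Proof.
move=> th0.
have c0 := cwl_gt0.
have -> : cos_avg (fun g => g ^+ b * trig b (2 * g * t)) =
    \sum_(y : Y) (N^-1 * cos (ph y) * G y ^+ b) * trig b (2 * G y * t).
  by rewrite /cos_avg mulr_sumr; apply: eq_bigr => y _; ring.
apply: (norm_wsum_lim_le (fun y => @trig_series b (2 * G y * t))) => M.
under eq_bigr do rewrite mulr_sumr.
rewrite exchange_big /=.
apply: (le_trans (ler_norm_sum _ _ _)).
apply: (@le_trans _ _ (\sum_(k < M) c ^+ b * (expR (th * b%:R - th * (xnorm.*2)%:R) *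
     ((expR th * (2 * `|t| * c)) ^+ (b + k.*2) / (b + k.*2)`!%:R)))).
  apply: ler_sum => k _.
  have -> : \sum_(y : Y) N^-1 * cos (ph y) * G y ^+ b *
        ((-1) ^+ k * (2 * G y * t) ^+ (b + k.*2) / (b + k.*2)`!%:R) =
      (-1) ^+ k * (2 * t) ^+ (b + k.*2) / (b + k.*2)`!%:R * (N^-1 * moment_x (b + k)).
    rewrite /moment !mulr_sumr; apply: eq_bigr => y _.
    rewrite /gam2 -exprM (_ : 2 * G y * t = 2 * t * G y) 1?mulrAC // exprMn.
    rewrite (_ : 2 * (b + k) = b + (b + k.*2))%N; last by rewrite mul2n doubleD addnA addnn.
    by rewrite [G y ^+ (b + (b + _))]exprD; ring.
  have coef_norm : `|(-1) ^+ k * (2 * t) ^+ (b + k.*2) / (b + k.*2)`!%:R| =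
      (2 * `|t|) ^+ (b + k.*2) / (b + k.*2)`!%:R.
    by rewrite !normrM normr_sign mul1r normrX normfV normrM (@ger0_norm _ 2) // normr_nat.
  rewrite normrM coef_norm.
  apply: taylor_term_le; rewrite ?mulr_ge0 ?normr_ge0 ?(ltW c0) //.
    by rewrite -exprD addnA addnn -doubleD norm_avg_moment_le.
  rewrite addnC addnA addnn -doubleD ltn_double => lt_dx.
  by rewrite moment_x_eq0 ?mulr0 ?normr0 // addnC.
rewrite -mulr_sumr ler_wpM2l ?exprn_ge0 ?(ltW c0) // -mulr_sumr.
apply: (@le_trans _ _
  (expR (th * b%:R - th * (xnorm.*2)%:R) * expR (expR th * (2 * `|t| * c)))).
  rewrite ler_wpM2l ?expR_ge0 // partial_sum_exp_parity_le //.
  by rewrite !mulr_ge0 ?expR_ge0 ?normr_ge0 // ltW.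
by rewrite -expRD addrAC.
Qed.

Lemma norm_cos_avg_cos_le mu t : 0 < mu ->
  `|cos_avg (fun g => cos (2 * g * t))| <= expR (speed mu * (2 * `|t| * c) - mu * xnorm%:R).
Proof.
move=> mu0; apply: le_expR_speed => //.
- by rewrite !mulr_ge0 ?normr_ge0 // ltW // cwl_gt0.
- by apply: norm_cos_avg_le => g _; exact: cos_max.
move=> th th0; have := norm_cos_avg_trig_le false t th0.
rewrite (@eq_cos_avg _ (fun g => cos (2 * g * t))) => [|g]; last exact: mul1r.
by rewrite expr0 mul1r mulr0 add0r -mul2n natrM mulrA (mulrC th 2).
Qed.

Lemma norm_cos_avg_gam_sin_le mu t : 0 < mu ->
  `|cos_avg (fun g => g * sin (2 * g * t))| <=
    c * expR (mu / 2 + (speed mu * (2 * `|t| * c) - mu * xnorm%:R)).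
Proof.
move=> mu0; have c0 := cwl_gt0.
rewrite -ler_pdivrMl //.
rewrite (_ : mu / 2 + _ = speed mu * (2 * `|t| * c) - mu * (xnorm%:R - 1 / 2)); last by ring.
apply: le_expR_speed => //.
- by rewrite !mulr_ge0 ?normr_ge0 // ltW.
- rewrite ler_pdivrMl // mulr1; apply: norm_cos_avg_le => g /andP[g0 gc].
  rewrite normrM (ger0_norm (ltW g0)) -[leRHS]mulr1.
  by rewrite ler_pM ?normr_ge0 ?sin_max // ltW.
move=> th th0; have := norm_cos_avg_trig_le true t th0.
rewrite expr1 mulr1 ler_pdivrMl //.
suff -> : th + expR th * (2 * `|t| * c) - th * (xnorm.*2)%:R =
  expR th * (2 * `|t| * c) - 2 * th * (xnorm%:R - 1 / 2) by [].
by rewrite -mul2n natrM; field.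
Qed.

Definition sin_avg_primitive (t : R) :=
  \sum_(y : Y) (N^-1 * cos (ph y) / (2 * G y)) * sin (2 * G y * t).

Lemma is_derive_sin_avg_primitive u :
  is_derive u (1 : R) sin_avg_primitive (cos_avg (fun g => cos (2 * g * u))).
Proof.
apply: is_derive_eq; first exact: is_derive_sum_sin.
rewrite /cos_avg mulr_sumr; apply: eq_bigr => y _.
by field; rewrite (gt_eqF (gam_gt0 y)) (gt_eqF cardLambda_gt0).
Qed.

Lemma norm_cos_avg_sinc_le mu t : 0 < mu ->
  `|cos_avg (fun g => sin (2 * g * t) / g)| <=
    expR (speed mu * (2 * `|t| * c) - mu * xnorm%:R) / c.
Proof.
move=> mu0; have c0 := cwl_gt0.
have K0 : 0 < speed mu by apply: lt_le_trans (speed_ge1 mu0).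
have -> : cos_avg (fun g => sin (2 * g * t) / g) = 2 * sin_avg_primitive t.
  rewrite /cos_avg /sin_avg_primitive !mulr_sumr; apply: eq_bigr => y _.
  by field; rewrite (gt_eqF (gam_gt0 y)) (gt_eqF cardLambda_gt0).
have prim_odd : `|sin_avg_primitive t| = `|sin_avg_primitive (`|t|)|.
  have [t0|t0] := leP 0 t; first by rewrite (ger0_norm t0).
  rewrite (ltr0_norm t0) -normrN /sin_avg_primitive -sumrN.
  by congr `|_|; apply: eq_bigr => y _; rewrite mulrN sinN mulrN.
have dprim_le u : 0 <= u ->
    `|cos_avg (fun g => cos (2 * g * u))| <= expR (2 * c * speed mu * u - mu * xnorm%:R).
  move=> u0; apply: le_trans (norm_cos_avg_cos_le u mu0) _.
  by rewrite ger0_norm // (_ : speed mu * _ = 2 * c * speed mu * u) //; ring.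
have prim0 : sin_avg_primitive 0 = 0.
  by rewrite /sin_avg_primitive big1 // => y _; rewrite mulr0 sin0 mulr0.
rewrite normrM ger0_norm // prim_odd.
have A0 : 0 < 2 * c * speed mu.
  by apply: mulr_gt0 => //; apply: mulr_gt0.
have := norm_le_of_derive A0 is_derive_sin_avg_primitive prim0 dprim_le (normr_ge0 t).
move/(ler_wpM2l (ler0n R 2))/le_trans; apply.
rewrite (_ : speed mu * _ = 2 * c * speed mu * `|t|); last by ring.
set X := expR _.
rewrite (_ : 2 * (X / (2 * c * speed mu)) = X / c / speed mu); last by field; rewrite !gt_eqF.
by rewrite ler_pdivrMr // ler_peMr ?divr_ge0 ?expR_ge0 ?(ltW c0) // speed_ge1.
Qed.


Lemma hboundE mu t : hbound omega lam mu t x =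
  (1 + c * expR (mu / 2) / 2 + c^-1 / 2) * expR (speed mu * (2 * `|t| * c) - mu * xnorm%:R).
Proof. by rewrite /hbound /= l1norm_dx /speed; congr (_ * expR _); field. Qed.

Lemma norm_Im_lsum_le mu t (s : R) (f : R -> R) : 0 < mu -> `|s| = 1 ->
  (forall g, f g = g + s * g^-1) ->
  `|complex.Im (lsum omega lam L f t x)| <=
    (c * expR (mu / 2) + c^-1) * expR (speed mu * (2 * `|t| * c) - mu * xnorm%:R).
Proof.
move=> mu0 s1 fE.
rewrite Im_lsum normrN
  (@eq_cos_avg _ (fun g => g * sin (2 * g * t) + s * (sin (2 * g * t) / g))).
  rewrite cos_avgD cos_avgZ; apply: le_trans (ler_normD _ _) _.
  rewrite [`|s * _|]normrM s1 mul1r mulrDl lerD //.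
    by rewrite -mulrA -expRD norm_cos_avg_gam_sin_le.
  by rewrite mulrC norm_cos_avg_sinc_le.
by move=> g; rewrite fE; ring.
Qed.

Lemma normc_h1_le mu t : 0 < mu ->
  Normc.normc (h1 omega lam L t x) <= hbound omega lam mu t x.
Proof.
move=> mu0.
have -> : h1 omega lam L t x = (complex.Re (lsum omega lam L (fun=> 1) t x) +i*
    (complex.Im (lsum omega lam L (fun g => g + g^-1) t x) / 2))%C.
  by rewrite /h1 /=; congr Complex; ring.
apply: le_trans (normc_le _ _) _.
rewrite hboundE -addrA mulrDl lerD //.
  rewrite mul1r Re_lsum (@eq_cos_avg _ (fun g => cos (2 * g * t))) => [|g].
    exact: norm_cos_avg_cos_le.
  exact: mul1r.
rewrite normrM (ger0_norm (_ : 0 <= 2^-1)) // -mulrDl mulrAC ler_wpM2r //.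
by apply: (@norm_Im_lsum_le _ _ 1) => [||g]; rewrite ?normr1 ?mul1r.
Qed.

Lemma normc_h2_le mu t : 0 < mu ->
  Normc.normc (h2 omega lam L t x) <= hbound omega lam mu t x.
Proof.
move=> mu0.
have -> : h2 omega lam L t x =
    (0 +i* (complex.Im (lsum omega lam L (fun g => g - g^-1) t x) / 2))%C.
  by rewrite /h2 /=; congr Complex; ring.
apply: le_trans (normc_le _ _) _.
rewrite hboundE normr0 add0r -addrA mulrDl ler_wpDl ?mulr_ge0 ?expR_ge0 //.
rewrite normrM (ger0_norm (_ : 0 <= 2^-1)) // -mulrDl mulrAC ler_wpM2r //.
by apply: (@norm_Im_lsum_le _ _ (-1)) => [||g]; rewrite ?normrN1 ?mulN1r.
Qed.

End Bounds.

Theorem lemma3p4 (R : realType) (nu : nat) (omega : R) (lam : 'I_nu -> R)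
  (L : nat) (mu t : R) (x : 'I_nu -> int) :
  (1 <= nu)%N -> 0 < omega -> (forall j, 0 <= lam j) -> (0 < L)%N ->
  0 < mu -> inLambda L x ->
  Normc.normc (h1 omega lam L t x) <= hbound omega lam mu t x /\
  Normc.normc (h2 omega lam L t x) <= hbound omega lam mu t x.
Proof.
move=> _ omega_gt0 lam_ge0 L_gt0 mu_gt0 x_in.
by split; [exact: normc_h1_le | exact: normc_h2_le].
Qed.
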